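(* Let $n=2k$ be an even positive integer and $m$ a positive divisor of $n$. Let $u_1,\ldots,u_\tau\in\mathbb{F}_{2^n}$ be pairwise distinct, where $1\le\tau\le k$, and let $F(X_1,\ldots,X_\tau)$ be a reduced polynomial in $\mathbb{F}_2[X_1,\ldots,X_\tau]$. Let $G:\mathbb{F}_{2^n}\to\mathbb{F}_{2^m}$ be a vectorial bent function such that for every $\lambda\in\mathbb{F}_{2^m}^*$ with $\mathrm{Tr}^m_1(\lambda)=1$, the dual $G_\lambda^*$ of the component $G_\lambda$ satisfies $D_{u_i}D_{u_j}G_\lambda^*=0$ for all $1\le i<j\le\tau$. Then $H(x)=G(x)+F(\mathrm{Tr}^n_1(u_1x),\ldots,\mathrm{Tr}^n_1(u_\tau x))$ is a vectorial bent $(n,m)$-function.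
   Context: $\mathrm{Tr}^m_1(x)=\sum_{i=0}^{m-1}x^{2^i}$. For $\lambda\in\mathbb{F}_{2^m}^*$, $G_\lambda(x)=\mathrm{Tr}^m_1(\lambda G(x))$. For a Boolean function $f$ on $\mathbb{F}_{2^n}$, $W_f(a)=\sum_x(-1)^{f(x)+\mathrm{Tr}^n_1(ax)}$; $f$ is bent if $|W_f(a)|=2^{n/2}$ for all $a$, with dual $f^*$ given by $W_f(a)=2^{n/2}(-1)^{f^*(a)}$. $G$ is vectorial bent if every $G_\lambda$, $\lambda\ne0$, is bent. $D_aD_bf(x)=f(x)+f(x+a)+f(x+b)+f(x+a+b)$. A reduced polynomial is a multilinear polynomial $\sum_{I}a_I\prod_{i\in I}X_i$ over $\mathbb{F}_2$. The value of $F(\cdots)$ lies in $\mathbb{F}_2\subseteq\mathbb{F}_{2^m}$. *)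

From HB Require Import structures.
From mathcomp Require Import all_boot all_order all_algebra all_field.
Set Implicit Arguments. Unset Strict Implicit. Unset Printing Implicit Defensive.
Import Order.TTheory GRing.Theory Num.Theory.
Local Open Scope ring_scope.

Definition trace (F : fieldType) (d : nat) (x : F) : F := \sum_(i < d) x ^+ (2 ^ i).

(* Its value lies in F_2 = {0,1}; we read it as a boolean. *)
Definition trb (F : fieldType) (d : nat) (x : F) : bool := trace d x != 0.

Definition walsh (L : finFieldType) (n : nat) (f : L -> bool) (a : L) : int :=
  \sum_(x : L) (-1) ^+ (addb (f x) (trb n (a * x))).

Definition bent (L : finFieldType) (n : nat) (f : L -> bool) : Prop :=
  forall a : L, absz (walsh n f a) = (2 ^ (n %/ 2))%N.

(* Dual of a bent function: W_f(a) = 2^(n/2) (-1)^(f^*(a)). *)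
Definition bdual (L : finFieldType) (n : nat) (f : L -> bool) (a : L) : bool :=
  walsh n f a < 0.

Definition component (L K : finFieldType) (m : nat) (G : L -> K) (lam : K) : L -> bool :=
  fun x => trb m (lam * G x).

Definition vbent (L K : finFieldType) (n m : nat) (G : L -> K) : Prop :=
  forall lam : K, lam != 0 -> bent n (component m G lam).

Definition DD (L : finFieldType) (f : L -> bool) (a b x : L) : bool :=
  addb (addb (f x) (f (x + a))) (addb (f (x + b)) (f (x + a + b))).

(* Reduced polynomial sum_I a_I prod_{i in I} X_i over F_2, given by its
   coefficient family a : {set 'I_tau} -> F_2, evaluated at b in F_2^tau. *)
Definition eval_reduced (tau : nat) (a : {ffun {set 'I_tau} -> bool})
  (b : 'I_tau -> bool) : bool :=
  \big[addb/false]_(I : {set 'I_tau}) (a I && [forall i in I, b i]).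

From HB Require Import structures.
From mathcomp Require Import all_boot all_order all_algebra all_field.
From mathcomp Require Import ring.

Import Order.TTheory GRing.Theory Num.Theory.
Local Open Scope ring_scope.
Set Implicit Arguments. Unset Strict Implicit. Unset Printing Implicit Defensive.

(* Expanding (-1)^F in the characters of F_2^tau writes 2^tau W_h(a), for
   h = g + F(Tr(u_1 x), ..., Tr(u_tau x)), as a combination of the values
   W_g(a + sum_{i in c} u_i).  As every D_{u_i} D_{u_j} g^* vanishes, the dual g^*
   is affine on a + span(u_i), so these values are W_g(a) times a character, and
   Fourier inversion collapses the sum to
   W_h(a) = (-1)^F(D_{u_1} g^*(a), ..., D_{u_tau} g^*(a)) W_g(a).
   Any Boolean function F of the traces works.  The component H_lambda adds
   Tr^m_1(lambda) F(...) to G_lambda, so only Tr^m_1(lambda) = 1 matters. *)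

Section AbsoluteTrace.
Variables (F : finFieldType) (d : nat).
Hypothesis cardF : #|F| = (2 ^ d)%N.

Lemma pchar2_finField : 2 \in [pchar F].
Proof. exact: card_finPcharP cardF _. Qed.

Lemma traceD (x y : F) : trace d (x + y) = trace d x + trace d y.
Proof.
rewrite /trace -big_split; apply: eq_bigr => i _; apply: exprDn_pchar.
by rewrite (eq_pnat _ (pcharf_eq pchar2_finField)) pnatX pnat_id.
Qed.

(* Squaring permutes the conjugates x^(2^i), since x^(2^d) = x. *)
Lemma trace_sqr (x : F) : trace d x ^+ 2 = trace d x.
Proof.
rewrite /trace -(pFrobenius_autE pchar2_finField) rmorph_sum /=.
have [d0 | d_gt0] := posnP d; first by rewrite d0 !big_ord0.
rewrite -(prednK d_gt0) big_ord_recr big_ord_recl /= pFrobenius_autE -exprM -expnSr.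
rewrite prednK // -cardF expf_card.
rewrite addrC expn0 expr1; congr (_ + _); apply: eq_bigr => i _.
by rewrite pFrobenius_autE -exprM -expnSr.
Qed.

Lemma trace_bool (x : F) : trace d x = (trb d x)%:R.
Proof.
have : trace d x * (trace d x - 1) = 0 by rewrite mulrBr mulr1 -expr2 trace_sqr subrr.
move/eqP; rewrite mulf_eq0 subr_eq0 /trb.
by case/orP=> /eqP ->; rewrite ?eqxx ?oner_eq0.
Qed.

Lemma trbD (x y : F) : trb d (x + y) = trb d x (+) trb d y.
Proof.
rewrite {1}/trb traceD !trace_bool.
case: (trb d x); case: (trb d y); rewrite ?addr0 ?add0r ?oner_eq0 ?eqxx //=.
by rewrite addrr_pchar2 ?pchar2_finField ?eqxx.
Qed.

Lemma trb0 : trb d (0 : F) = false.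
Proof. by have := trbD 0 0; rewrite addr0 addbb. Qed.

End AbsoluteTrace.

Definition sign (b : bool) : int := (-1) ^+ b.

Lemma sign_addb b1 b2 : sign (b1 (+) b2) = sign b1 * sign b2.
Proof. exact: signr_addb. Qed.

Lemma sign_big (I : finType) (P : pred I) (e : I -> bool) :
  sign (\big[addb/false]_(i | P i) e i) = \prod_(i | P i) sign (e i).
Proof. exact: (big_morph sign sign_addb). Qed.

Section BooleanFourier.
Variable tau : nat.
Notation BV := {ffun 'I_tau -> bool}.

Definition dotb (c b : 'I_tau -> bool) : bool := \big[addb/false]_(i < tau) (c i && b i).

Lemma dotbDr (c b t : 'I_tau -> bool) :
  dotb c b (+) dotb c t = dotb c (fun i => b i (+) t i).
Proof. by rewrite /dotb -big_split; apply: eq_bigr => i _; case: (c i). Qed.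

Lemma sum_sign_dotb (b t : BV) :
  \sum_(c : BV) sign (dotb c b) * sign (dotb c t) = if b == t then 2 ^+ tau else 0.
Proof.
under eq_bigr => c _ do rewrite -sign_addb dotbDr sign_big.
rewrite -(bigA_distr_bigA (fun i ci => sign (ci && (b i (+) t i)))) /=.
have [->|neq_bt] := eqVneq b t.
  rewrite (eq_bigr (fun _ => 2)) ?prodr_const ?card_ord // => i _.
  by rewrite big_bool /= addbb.
have [i neq_bti] : exists i, b i != t i.
  apply/existsP; apply: contraNT neq_bt => /existsPn eq_bt.
  by apply/eqP/ffunP => i; apply/eqP/negbNE.
by rewrite (bigD1 i) //= big_bool /= -negb_eqb neq_bti mul0r.
Qed.

Lemma fourier_inversion (w : BV -> int) (t : BV) :
  \sum_(b : BV) w b * \sum_(c : BV) sign (dotb c b) * sign (dotb c t) = 2 ^+ tau * w t.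
Proof.
under eq_bigr => b _ do rewrite sum_sign_dotb.
rewrite (bigD1 t) //= eqxx big1 ?addr0 1?mulrC // => b /negbTE ->.
by rewrite mulr0.
Qed.

End BooleanFourier.

Definition bderiv (L : zmodType) (f : L -> bool) (a x : L) : bool := f (x + a) (+) f x.

Lemma DD_bderiv (L : finFieldType) (f : L -> bool) (a b x : L) :
  DD f a b x = bderiv f a (x + b) (+) bderiv f a x.
Proof.
rewrite /DD /bderiv addrAC.
by case: (f x); case: (f (x + a)); case: (f (x + b)); case: (f (x + b + a)).
Qed.

Lemma DD_sym (L : finFieldType) (f : L -> bool) (a b x : L) : DD f a b x = DD f b a x.
Proof.
rewrite /DD addrAC.
by case: (f x); case: (f (x + a)); case: (f (x + b)); case: (f (x + b + a)).
Qed.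

Section AffineOnSpan.
Variables (L : finFieldType) (tau : nat) (u : 'I_tau -> L) (f : L -> bool).
Hypothesis DDu : forall i j : 'I_tau, (i < j)%N -> forall x, DD f (u i) (u j) x = false.

Lemma bderiv_shift i j x : i != j -> bderiv f (u i) (x + u j) = bderiv f (u i) x.
Proof.
move=> neq_ij; have : DD f (u i) (u j) x = false.
  have [lt_ij | lt_ji | eq_ij] := ltngtP i j; first exact: DDu.
    by rewrite DD_sym DDu.
  by rewrite (val_inj eq_ij) eqxx in neq_ij.
by rewrite DD_bderiv; case: bderiv; case: bderiv.
Qed.

Lemma bderiv_shift_sum i (r : seq 'I_tau) x :
  i \notin r -> bderiv f (u i) (x + \sum_(j <- r) u j) = bderiv f (u i) x.
Proof.
elim: r x => [|j r IHr] x; first by rewrite big_nil addr0.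
rewrite inE negb_or big_cons addrA addrAC => /andP[neq_ij notin_r].
by rewrite bderiv_shift // IHr.
Qed.

Lemma affine_on_span (a : L) (r : seq 'I_tau) : uniq r ->
  f (a + \sum_(j <- r) u j) = f a (+) \big[addb/false]_(j <- r) bderiv f (u j) a.
Proof.
elim: r => [|i r IHr] /=; first by rewrite !big_nil addr0 addbF.
case/andP=> notin_r uniq_r; rewrite !big_cons addrA addrAC.
have -> y : f (y + u i) = bderiv f (u i) y (+) f y by rewrite /bderiv addbK.
by rewrite bderiv_shift_sum // IHr // addbCA.
Qed.

Lemma affine_on_span_dotb (a : L) (c : 'I_tau -> bool) :
  f (a + \sum_(i | c i) u i) = f a (+) dotb c [ffun i => bderiv f (u i) a].
Proof.
rewrite -big_filter affine_on_span ?filter_uniq ?index_enum_uniq // big_filter.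
by rewrite big_mkcond; congr addb; apply: eq_bigr => i _; rewrite ffunE.
Qed.

End AffineOnSpan.

Lemma walsh_bentE (L : finFieldType) (n : nat) (f : L -> bool) (a : L) :
  bent n f -> walsh n f a = sign (bdual n f a) * (2 ^ (n %/ 2))%N%:Z.
Proof. by move=> bent_f; rewrite {1}[walsh n f a]intEsign (bent_f a). Qed.

Lemma eq_bent (L : finFieldType) (n : nat) (f f' : L -> bool) :
  f =1 f' -> bent n f -> bent n f'.
Proof.
move=> eq_f bent_f a; rewrite -(bent_f a) /walsh.
by under eq_bigr => x _ do rewrite -eq_f.
Qed.

Section TraceModification.
Variables (L : finFieldType) (n tau : nat) (u : 'I_tau -> L).
Hypothesis cardL : #|L| = (2 ^ n)%N.
Notation BV := {ffun 'I_tau -> bool}.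

Lemma dotb_trb (c : 'I_tau -> bool) (x : L) :
  dotb c [ffun i => trb n (u i * x)] = trb n ((\sum_(i | c i) u i) * x).
Proof.
rewrite mulr_suml (big_morph _ (trbD cardL) (trb0 cardL)) /dotb [RHS]big_mkcond.
by apply: eq_bigr => i _; rewrite ffunE.
Qed.

Variables (g : L -> bool) (Fb : BV -> bool).

Lemma walsh_trace_expansion (a : L) :
  2 ^+ tau * walsh n (fun x => g x (+) Fb [ffun i => trb n (u i * x)]) a =
  \sum_(b : BV) sign (Fb b) *
    \sum_(c : BV) sign (dotb c b) * walsh n g (a + \sum_(i | c i) u i).
Proof.
rewrite {1}/walsh mulr_sumr.
transitivity (\sum_(x : L) \sum_(b : BV) \sum_(c : BV)
  sign (Fb b) * sign (dotb c b) * sign (g x (+) trb n ((a + \sum_(i | c i) u i) * x))).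
  apply: eq_bigr => x _; rewrite -[(-1) ^+ _]/(sign _) addbAC sign_addb mulrCA.
  rewrite -(fourier_inversion (sign \o Fb)) mulr_sumr; apply: eq_bigr => b _.
  rewrite mulrCA !mulr_sumr; apply: eq_bigr => c _.
  by rewrite dotb_trb mulrDl (trbD cardL) !sign_addb; ring.
rewrite exchange_big; apply: eq_bigr => b _; rewrite exchange_big mulr_sumr.
apply: eq_bigr => c _; rewrite /walsh !mulr_sumr.
by apply: eq_bigr => x _; rewrite mulrA.
Qed.

Hypothesis bent_g : bent n g.
Hypothesis DD_dual :
  forall i j : 'I_tau, (i < j)%N -> forall x, DD (bdual n g) (u i) (u j) x = false.

Lemma walsh_span_shift (a : L) (c : 'I_tau -> bool) :
  walsh n g (a + \sum_(i | c i) u i) =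
  sign (dotb c [ffun i => bderiv (bdual n g) (u i) a]) * walsh n g a.
Proof. by rewrite !walsh_bentE // affine_on_span_dotb // sign_addb mulrCA mulrA. Qed.

Lemma walsh_add_trace_function (a : L) :
  walsh n (fun x => g x (+) Fb [ffun i => trb n (u i * x)]) a =
  sign (Fb [ffun i => bderiv (bdual n g) (u i) a]) * walsh n g a.
Proof.
apply: (@mulfI _ (2 ^+ tau)); first by rewrite expf_neq0.
rewrite walsh_trace_expansion mulrA -(fourier_inversion (sign \o Fb)) mulr_suml.
apply: eq_bigr => b _; rewrite -mulrA mulr_suml; congr (_ * _).
by apply: eq_bigr => c _; rewrite walsh_span_shift mulrA.
Qed.

Lemma bent_add_trace_function :
  bent n (fun x => g x (+) Fb [ffun i => trb n (u i * x)]).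
Proof. by move=> a; rewrite walsh_add_trace_function /sign abszMsign bent_g. Qed.

End TraceModification.

Lemma eq_eval_reduced (tau : nat) (F : {ffun {set 'I_tau} -> bool}) (b b' : 'I_tau -> bool) :
  b =1 b' -> eval_reduced F b = eval_reduced F b'.
Proof.
by move=> eq_b; apply: eq_bigr => I _; congr andb; apply: eq_forallb => i; rewrite eq_b.
Qed.

Theorem corollary3 (n m k tau : nat) (L K : finFieldType)
  (hL : #|L| = (2 ^ n)%N) (hK : #|K| = (2 ^ m)%N)
  (hn : n = k.*2) (hk : (0 < k)%N) (hm : (0 < m)%N) (hmn : (m %| n)%N)
  (u : 'I_tau -> L) (hu : injective u) (htau : (1 <= tau <= k)%N)
  (F : {ffun {set 'I_tau} -> bool}) (G : L -> K)
  (hG : vbent n m G)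
  (hD : forall lam : K, lam != 0 -> trb m lam ->
        forall i j : 'I_tau, (i < j)%N ->
        forall x : L, DD (bdual n (component m G lam)) (u i) (u j) x = false) :
  vbent n m (fun x : L => G x + (eval_reduced F (fun i => trb n (u i * x)) : nat)%:R).
Proof.
move=> lam lam_neq0.
set e := fun x => eval_reduced F (fun i => trb n (u i * x)).
have component_H x : component m (fun x => G x + (e x : nat)%:R) lam x =
    component m G lam x (+) (trb m lam && e x).
  rewrite /component mulrDr (trbD hK).
  by case: (e x); rewrite ?mulr1 ?mulr0 ?(trb0 hK) ?andbT ?andbF.
have [trb_lam | /negbTE trb_lam] := boolP (trb m lam).
  have := bent_add_trace_function hL (fun b => trb m lam && eval_reduced F b)
    (hG lam lam_neq0) (hD lam lam_neq0 trb_lam).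
  apply: eq_bent => x; rewrite component_H; congr (_ (+) (_ && _)).
  by apply: eq_eval_reduced => i; rewrite ffunE.
by apply: eq_bent (hG lam lam_neq0) => x; rewrite component_H trb_lam addbF.
Qed.
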